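(* Let $\mathbf V$ be a monoid variety and let $\mathcal F$ be a logic corresponding to $\mathbf V$. Let $f$ be a partial function $\Sigma^\ast\to\Sigma^\ast$ definable by an $\mathcal F$-translation. Then $f$ is definable by a complete $\mathbf V$-bimachine.
   Context: Bimachines: a bimachine is a tuple $B=(L,R,\omega,\lambda,\rho)$ where $L$ is a deterministic left automaton over $\Sigma$ with initial state $l_0$, $R$ is a deterministic right automaton (reading right to left) with initial state $r_0$, $\omega:L\times\Sigma\times R\to\Sigma^\ast$ is a partial output function and $\rho:L\to\Sigma^\ast$, $\lambda:R\to\Sigma^\ast$ are partial. For $u=\sigma_1\cdots\sigma_n$ with runs $l_0\xrightarrow{\sigma_1}l_1\cdots\xrightarrow{\sigma_n}l_n$ of $L$ and $r_n\xleftarrow{\sigma_1}r_{n-1}\cdots r_1\xleftarrow{\sigma_n}r_0$ of $R$, $[\![B]\!](u)=\lambda(r_n)\,\omega(l_0,\sigma_1,r_{n-1})\cdots\omega(l_{i-1},\sigma_i,r_{n-i})\cdots\omega(l_{n-1},\sigma_n,r_0)\,\rho(l_n)$ when all these are defined. $B$ is complete if $\omega$ is total. The transition congruence of an automaton $A$ with state set $Q$ is $u\equiv_A v$ iff for all $p,q\in Q$, ($A$ has a run from $p$ to $q$ on $u$) $\Leftrightarrow$ (it has one on $v$); the transition monoid is $\Sigma^\ast/\equiv_A$; $A$ is a $\mathbf V$-automaton if its transition monoid is in $\mathbf V$. $B$ is a $\mathbf V$-bimachine if $L$ and $R$ are $\mathbf V$-automata. A language is a $\mathbf V$-language if it is recognized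 by some $\mathbf V$-automaton. Logics: $\mathcal F$ is a fragment of monadic second-order logic over words (signature $<$ and unary letter predicates); a language is an $\mathcal F$-language if it is the set of words satisfying some closed $\mathcal F$-formula; $\mathcal F$ corresponds to $\mathbf V$ if the $\mathcal F$-languages are exactly the $\mathbf V$-languages. Translations: an $\mathcal F$-translation is a tuple $\mathcal T=(k,S,(\varphi^<_{j,\sigma,v},\varphi^>_{j,\sigma,v})_{1\le j\le k,\sigma\in\Sigma,v\in S},(\varphi^i_v)_{v\in S},(\varphi^t_v)_{v\in S})$ with $k>0$, $S\subset\Sigma^\ast$ finite, and all $\varphi$ closed $\mathcal F$-formulas. $(u,w)\in[\![\mathcal T]\!]$ iff for $u=\sigma_1\cdots\sigma_n$ there is a decomposition $w=w_0w_1\cdots w_nw_{n+1}$ with all $w_i\in S$ such that for each $1\le i\le n$ there is $j\le k$ with $\sigma_1\cdots\sigma_{i-1}\models\varphi^<_{j,\sigma_i,w_i}$ and $\sigma_{i+1}\cdots\sigma_n\models\varphi^>_{j,\sigma_i,w_i}$, and $u\models\varphi^i_{w_0}$, $u\models\varphi^t_{w_{n+1}}$. It is required to be exhaustive: for all $\sigma\in\Sigma$, $u,w\in\Sigma^\ast$ there are $j\le k$, $v\in S$ with $u\models\varphi^<_{j,\sigma,v}$ and $w\models\varphi^>_{j,\sigma,v}$; and functional: for $v_1\ne v_2$ in $S$ and any $j,j',\sigma$, either $\varphi^<_{j,\sigma,v_1}\wedge\varphi^<_{j',\sigma,v_2}$ or $\varphi^>_{j,\sigma,v_1}\wedge\varphi^>_{j',\sigma,v_2}$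 is unsatisfiable, and $\varphi^i_{v_1}\wedge\varphi^i_{v_2}$, $\varphi^t_{v_1}\wedge\varphi^t_{v_2}$ are unsatisfiable. A function is definable by $\mathcal T$ if it equals $[\![\mathcal T]\!]$. *)

From mathcomp Require Import all_boot.
Set Implicit Arguments. Unset Strict Implicit. Unset Printing Implicit Defensive.

Record finMon := FinMon {
  mcar :> finType;
  mmul : mcar -> mcar -> mcar;
  mone : mcar;
  mmulA : forall x y z, mmul x (mmul y z) = mmul (mmul x y) z;
  mmul1 : forall x, mmul mone x = x;
  mmulm1 : forall x, mmul x mone = x }.

Definition unitMon : finMon :=
  @FinMon unit (fun _ _ => tt) tt
    (fun _ _ _ => erefl) (fun x => match x with tt => erefl end)
    (fun x => match x with tt => erefl end).

Section Prod.
Variables M N : finMon.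
Definition pmul (x y : M * N) : M * N := (mmul x.1 y.1, mmul x.2 y.2).
Lemma pmulA x y z : pmul x (pmul y z) = pmul (pmul x y) z.
Proof. by rewrite /pmul /= !mmulA. Qed.
Lemma pmul1 x : pmul (mone M, mone N) x = x.
Proof. by case: x => a b; rewrite /pmul /= !mmul1. Qed.
Lemma pmulm1 x : pmul x (mone M, mone N) = x.
Proof. by case: x => a b; rewrite /pmul /= !mmulm1. Qed.
Definition prodMon : finMon :=
  @FinMon (M * N)%type pmul (mone M, mone N) pmulA pmul1 pmulm1.
End Prod.

Definition divides (N M : finMon) : Prop :=
  exists (S : pred M) (f : M -> N),
    [/\ S (mone M),
        (forall x y, S x -> S y -> S (mmul x y)),
        f (mone M) = mone N,
        (forall x y, S x -> S y -> f (mmul x y) = mmul (f x) (f y)) &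
        (forall n : N, exists2 x, S x & f x = n)].

(* A monoid variety (pseudovariety of finite monoids): a class of finite
   monoids closed under submonoids, homomorphic images (hence division and
   isomorphism) and finite direct products (including the empty one). *)
Definition monoid_variety (V : finMon -> Prop) : Prop :=
  [/\ V unitMon,
      (forall M N, V M -> V N -> V (prodMon M N)) &
      (forall M N, V M -> divides N M -> V N)].

Section Words.
Variable A : finType.

(* M is (isomorphic to) the quotient Sigma^* / cong : phi is a surjective
   monoid morphism from Sigma^* onto M whose kernel is cong. *)
Definition is_quotient_monoid (cong : seq A -> seq A -> Prop) (M : finMon) :=
  exists phi : seq A -> M,
    [/\ phi [::] = mone M,
        (forall u v, phi (u ++ v) = mmul (phi u) (phi v)),
        (forall m : M, exists u, phi u = m) &
        (forall u v, phi u = phi v <-> cong u v)].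

(* Transition congruence associated with a run relation
   (run u p q  <->  there is a run from p to q reading u). *)
Definition trans_cong (Q : Type) (run : seq A -> Q -> Q -> Prop) u v :=
  forall p q, run u p q <-> run v p q.

Definition trans_monoid_in (V : finMon -> Prop) (Q : Type)
  (run : seq A -> Q -> Q -> Prop) :=
  exists M : finMon, V M /\ is_quotient_monoid (trans_cong run) M.

Record automaton := Automaton {
  ast : finType;
  atrans : ast -> A -> ast -> bool;
  ainit : pred ast;
  afin : pred ast }.

Fixpoint arun (B : automaton) (u : seq A) (p q : ast B) : Prop :=
  match u with
  | [::] => p = q
  | a :: u' => exists r, atrans p a r /\ arun u' r q
  end.

Definition accepts (B : automaton) (u : seq A) : Prop :=
  exists p q, @ainit B p /\ @afin B q /\ arun u p q.

Definition V_automaton (V : finMon -> Prop) (B : automaton) :=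
  trans_monoid_in V (@arun B).

Definition language := seq A -> Prop.

Definition V_language (V : finMon -> Prop) (L : language) :=
  exists B : automaton, V_automaton V B /\ forall u, L u <-> accepts B u.

Inductive formula :=
| FTrue | FFalse
| FLetter of A & nat
| FLt of nat & nat
| FEq of nat & nat
| FIn of nat & nat
| FNot of formula
| FAnd of formula & formula
| FOr of formula & formula
| FImp of formula & formula
| FEx1 of nat & formula
| FAll1 of nat & formula
| FEx2 of nat & formula
| FAll2 of nat & formula.

Fixpoint fv1 (f : formula) : seq nat :=
  match f with
  | FTrue | FFalse => [::]
  | FLetter _ x => [:: x]
  | FLt x y | FEq x y => [:: x; y]
  | FIn x _ => [:: x]
  | FNot g => fv1 g
  | FAnd g h | FOr g h | FImp g h => fv1 g ++ fv1 h
  | FEx1 x g | FAll1 x g => filter (predC1 x) (fv1 g)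
  | FEx2 _ g | FAll2 _ g => fv1 g
  end.

Fixpoint fv2 (f : formula) : seq nat :=
  match f with
  | FTrue | FFalse | FLetter _ _ | FLt _ _ | FEq _ _ => [::]
  | FIn _ X => [:: X]
  | FNot g => fv2 g
  | FAnd g h | FOr g h | FImp g h => fv2 g ++ fv2 h
  | FEx1 _ g | FAll1 _ g => fv2 g
  | FEx2 X g | FAll2 X g => filter (predC1 X) (fv2 g)
  end.

Definition closed (f : formula) : bool := (fv1 f == [::]) && (fv2 f == [::]).

Definition upd {T : Type} (e : nat -> T) (x : nat) (v : T) : nat -> T :=
  fun y => if y == x then v else e y.

(* positions of u are 0 .. size u - 1; set variables range over sets of
   positions *)
Fixpoint sat (u : seq A) (e1 : nat -> nat) (e2 : nat -> nat -> bool)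
  (f : formula) : Prop :=
  match f with
  | FTrue => True
  | FFalse => False
  | FLetter a x => onth u (e1 x) = Some a
  | FLt x y => e1 x < e1 y
  | FEq x y => e1 x = e1 y
  | FIn x X => e2 X (e1 x)
  | FNot g => ~ sat u e1 e2 g
  | FAnd g h => sat u e1 e2 g /\ sat u e1 e2 h
  | FOr g h => sat u e1 e2 g \/ sat u e1 e2 h
  | FImp g h => sat u e1 e2 g -> sat u e1 e2 h
  | FEx1 x g => exists i, i < size u /\ sat u (upd e1 x i) e2 g
  | FAll1 x g => forall i, i < size u -> sat u (upd e1 x i) e2 g
  | FEx2 X g => exists P : nat -> bool,
      (forall i, P i -> i < size u) /\ sat u e1 (upd e2 X P) g
  | FAll2 X g => forall P : nat -> bool,
      (forall i, P i -> i < size u) -> sat u e1 (upd e2 X P) g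
  end.

(* u |= f for a closed formula f *)
Definition models (u : seq A) (f : formula) : Prop :=
  sat u (fun _ => 0) (fun _ _ => false) f.

Definition fragment := formula -> Prop.

Definition F_language (F : fragment) (L : language) :=
  exists f, F f /\ closed f /\ forall u, L u <-> models u f.

Definition corresponds (F : fragment) (V : finMon -> Prop) :=
  forall L : language, F_language F L <-> V_language V L.

Definition unsat2 (f g : formula) := ~ exists u, models u f /\ models u g.

Record translation := Translation {
  tk : nat;
  tS : seq (seq A);
  tphiL : nat -> A -> seq A -> formula;
  tphiR : nat -> A -> seq A -> formula;
  tphiI : seq A -> formula;
  tphiT : seq A -> formula }.

Definition is_F_translation (F : fragment) (T : translation) : Prop :=
  [/\ 0 < tk T,
      (forall j a v, 1 <= j <= tk T -> v \in tS T ->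
          F (tphiL T j a v) /\ closed (tphiL T j a v) /\
          F (tphiR T j a v) /\ closed (tphiR T j a v)),
      (forall v, v \in tS T -> F (tphiI T v) /\ closed (tphiI T v) /\
                               F (tphiT T v) /\ closed (tphiT T v)),
      (forall (a : A) (u w : seq A), exists j v,
          [/\ 1 <= j <= tk T, v \in tS T,
              models u (tphiL T j a v) & models w (tphiR T j a v)]) &
      (forall v1 v2, v1 \in tS T -> v2 \in tS T -> v1 <> v2 ->
         (forall j j' a, 1 <= j <= tk T -> 1 <= j' <= tk T ->
            unsat2 (tphiL T j a v1) (tphiL T j' a v2) \/
            unsat2 (tphiR T j a v1) (tphiR T j' a v2)) /\
         unsat2 (tphiI T v1) (tphiI T v2) /\
         unsat2 (tphiT T v1) (tphiT T v2))].

(* (u, w) in [[T]]: w = w_0 w_1 ... w_n w_{n+1} (ws = [:: w_0; ...; w_{n+1}]).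
   For the letter sigma_i with u = x ++ sigma_i :: y (size x = i - 1),
   the prefix is x and the suffix is y, and the block is w_i. *)
Definition trans_rel (T : translation) (u w : seq A) : Prop :=
  exists ws : seq (seq A),
    [/\ size ws = (size u).+2,
        all (fun v => v \in tS T) ws,
        w = flatten ws,
        (forall x a y, u = x ++ a :: y ->
           exists j, [/\ 1 <= j <= tk T,
                        models x (tphiL T j a (nth [::] ws (size x).+1)) &
                        models y (tphiR T j a (nth [::] ws (size x).+1))]) &
        (models u (tphiI T (nth [::] ws 0)) /\
         models u (tphiT T (nth [::] ws (size u).+1)))].

Definition definable_by (f : seq A -> option (seq A)) (T : translation) :=
  forall u w, trans_rel T u w <-> f u = Some w.

Record bimachine := Bimachine {
  Lst : finType; l0 : Lst; dL : Lst -> A -> Lst;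
  Rst : finType; r0 : Rst; dR : Rst -> A -> Rst;
  omega : Lst -> A -> Rst -> option (seq A);
  lam : Rst -> option (seq A);
  rho : Lst -> option (seq A) }.

Definition left_run (Q : Type) (d : Q -> A -> Q) (u : seq A) (p q : Q) :=
  foldl d p u = q.
Definition right_run (Q : Type) (d : Q -> A -> Q) (u : seq A) (p q : Q) :=
  foldr (fun a r => d r a) p u = q.

Definition complete (B : bimachine) := forall l a r, @omega B l a r <> None.

Definition V_bimachine (V : finMon -> Prop) (B : bimachine) :=
  trans_monoid_in V (left_run (@dL B)) /\ trans_monoid_in V (right_run (@dR B)).

Fixpoint bm_mid (B : bimachine) (l : Lst B) (u : seq A) : option (seq A) :=
  match u with
  | [::] => Some [::]
  | a :: u' =>
      match @omega B l a (foldr (fun b r => @dR B r b) (r0 B) u'),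
            bm_mid (@dL B l a) u' with
      | Some o, Some s => Some (o ++ s)
      | _, _ => None
      end
  end.

(* [[B]](u) = lambda(r_n) omega(l_0,sigma_1,r_{n-1}) ... omega(l_{n-1},sigma_n,r_0) rho(l_n) *)
Definition bm_sem (B : bimachine) (u : seq A) : option (seq A) :=
  match @lam B (foldr (fun b r => @dR B r b) (r0 B) u), bm_mid (l0 B) u,
        @rho B (foldl (@dL B) (l0 B) u) with
  | Some x, Some m, Some y => Some (x ++ m ++ y)
  | _, _, _ => None
  end.

End Words.

(* A V-bimachine only has to remember, for the prefix and the suffix around
   each letter, enough to decide the finitely many F-formulas of the
   translation. Each such formula defines a V-language, hence is saturated by
   a morphism from Sigma^* to a monoid of V; the product of these morphisms is
   again such a morphism h. Running h from the left and from the right gives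
   left and right automata whose transition monoids are the image of h, a
   divisor of a member of V. The outputs at a letter are then chosen (by
   exhaustiveness) among the blocks allowed by the translation; saturation
   makes the choice independent of the representatives of h-classes. *)

From Stdlib Require Import ClassicalEpsilon.
From mathcomp Require Import all_boot.

Set Implicit Arguments. Unset Strict Implicit. Unset Printing Implicit Defensive.

Section PickOpt.
Variables (T : Type) (Q : T -> Prop).

Definition pick_opt : option T :=
  match excluded_middle_informative (exists v, Q v) with
  | left H => Some (proj1_sig (constructive_indefinite_description _ H))
  | right _ => None
  end.

Lemma pick_optP v : pick_opt = Some v -> Q v.
Proof.
rewrite /pick_opt; case: excluded_middle_informative => // H [<-].
exact: proj2_sig.
Qed.

Lemma pick_opt_None v : pick_opt = None -> ~ Q v.
Proof.
by rewrite /pick_opt; case: excluded_middle_informative => // H _ Qv; apply: H; exists v.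
Qed.

End PickOpt.

Section WordMorphisms.
Variables (A : finType) (P : finMon) (h : seq A -> P).
Hypotheses (h_nil : h [::] = mone P)
  (h_cat : forall u v, h (u ++ v) = mmul (h u) (h v)).

Definition in_image (x : P) : bool :=
  if excluded_middle_informative (exists u, h u = x) then true else false.

Lemma in_imageP x : reflect (exists u, h u = x) (in_image x).
Proof. by rewrite /in_image; case: excluded_middle_informative => H; constructor. Qed.

Lemma in_image_h u : in_image (h u).
Proof. by apply/in_imageP; exists u. Qed.

Lemma in_image_one : in_image (mone P).
Proof. by rewrite -h_nil in_image_h. Qed.

Lemma in_image_mul x y : in_image x -> in_image y -> in_image (mmul x y).
Proof. by move=> /in_imageP [u <-] /in_imageP [v <-]; rewrite -h_cat in_image_h. Qed.

Definition image_type := {x : P | in_image x}.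

Definition image_mul (x y : image_type) : image_type :=
  exist (fun z => in_image z) _ (in_image_mul (valP x) (valP y)).
Definition image_one : image_type := exist (fun z => in_image z) _ in_image_one.

Lemma image_mulA x y z : image_mul x (image_mul y z) = image_mul (image_mul x y) z.
Proof. by apply: val_inj; rewrite /= mmulA. Qed.
Lemma image_mul1 x : image_mul image_one x = x.
Proof. by apply: val_inj; rewrite /= mmul1. Qed.
Lemma image_mulm1 x : image_mul x image_one = x.
Proof. by apply: val_inj; rewrite /= mmulm1. Qed.

Definition image_monoid : finMon :=
  @FinMon image_type image_mul image_one image_mulA image_mul1 image_mulm1.

Lemma image_monoid_divides : divides image_monoid P.
Proof.
exists in_image, (insubd image_one); split.
- exact: in_image_one.
- exact: in_image_mul.
- by apply: val_inj; rewrite insubdK //; exact: in_image_one.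
- by move=> x y Hx Hy; apply: val_inj; rewrite /= !insubdK //; exact: in_image_mul.
- by move=> n; exists (val n); [exact: valP | apply: val_inj; rewrite insubdK //; exact: valP].
Qed.

Lemma image_monoid_quotient : is_quotient_monoid (fun u v => h u = h v) image_monoid.
Proof.
exists (fun u => exist (fun z => in_image z) (h u) (in_image_h u) : image_monoid); split.
- by apply: val_inj; rewrite /= h_nil.
- by move=> u v; apply: val_inj; rewrite /= h_cat.
- by move=> [m Hm]; have [u Hu] := in_imageP m Hm; exists u; apply: val_inj.
- by move=> u v; split=> [/(congr1 val) | E] //; apply: val_inj.
Qed.

Definition step_left (q : P) (a : A) : P := mmul q (h [:: a]).
Definition step_right (q : P) (a : A) : P := mmul (h [:: a]) q.

Lemma foldl_step_left u q : foldl step_left q u = mmul q (h u).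
Proof.
elim: u q => [|a u IHu] q /=; first by rewrite h_nil mmulm1.
by rewrite IHu /step_left -mmulA -h_cat.
Qed.

Lemma foldr_step_right u q : foldr (fun a r => step_right r a) q u = mmul (h u) q.
Proof.
elim: u => [|a u IHu] /=; first by rewrite h_nil mmul1.
by rewrite IHu /step_right mmulA -h_cat.
Qed.

Lemma trans_cong_step_left u v : trans_cong (left_run step_left) u v <-> h u = h v.
Proof.
rewrite /trans_cong /left_run; split=> [E | E p q]; last by rewrite !foldl_step_left E.
by move: (E (mone P) (h u)); rewrite !foldl_step_left !mmul1 => [[/(_ erefl) <-]].
Qed.

Lemma trans_cong_step_right u v : trans_cong (right_run step_right) u v <-> h u = h v.
Proof.
rewrite /trans_cong /right_run; split=> [E | E p q]; last by rewrite !foldr_step_right E.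
by move: (E (mone P) (h u)); rewrite !foldr_step_right !mmulm1 => [[/(_ erefl) <-]].
Qed.

End WordMorphisms.

Lemma is_quotient_monoid_ext (A : finType) (c1 c2 : seq A -> seq A -> Prop) M :
  (forall u v, c1 u v <-> c2 u v) -> is_quotient_monoid c1 M -> is_quotient_monoid c2 M.
Proof. by move=> E [phi [H1 H2 H3 H4]]; exists phi; split=> // u v; rewrite H4 E. Qed.

Definition saturates (A : finType) (X : Type) (h : seq A -> X) (psi : formula A) :=
  forall u w, h u = h w -> models u psi -> models w psi.

Section VarietyMorphisms.
Variables (A : finType) (V : finMon -> Prop).
Hypothesis V_variety : monoid_variety V.

Let V_unit : V unitMon. Proof. by case: V_variety. Qed.
Let V_prod M N : V M -> V N -> V (prodMon M N). Proof. by case: V_variety => _ + _; apply. Qed.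
Let V_div M N : V M -> divides N M -> V N. Proof. by case: V_variety => _ _; apply. Qed.

Record vmorph := VMorph {
  vm_mon : finMon;
  vm_fun :> seq A -> vm_mon;
  vm_in : V vm_mon;
  vm_nil : vm_fun [::] = mone vm_mon;
  vm_cat : forall u v, vm_fun (u ++ v) = mmul (vm_fun u) (vm_fun v) }.

Lemma trans_monoid_step_left (m : vmorph) : trans_monoid_in V (left_run (step_left m)).
Proof.
exists (image_monoid (vm_nil m) (vm_cat m)); split.
  exact: V_div (vm_in m) (image_monoid_divides _ _).
apply: is_quotient_monoid_ext (image_monoid_quotient _ _) => u v.
by apply: iff_sym; apply: trans_cong_step_left; [exact: vm_nil | exact: vm_cat].
Qed.

Lemma trans_monoid_step_right (m : vmorph) : trans_monoid_in V (right_run (step_right m)).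
Proof.
exists (image_monoid (vm_nil m) (vm_cat m)); split.
  exact: V_div (vm_in m) (image_monoid_divides _ _).
apply: is_quotient_monoid_ext (image_monoid_quotient _ _) => u v.
by apply: iff_sym; apply: trans_cong_step_right; [exact: vm_nil | exact: vm_cat].
Qed.

Definition vmorph_unit : vmorph := @VMorph unitMon (fun _ => tt) V_unit erefl (fun _ _ => erefl).

Definition vmorph_prod (m1 m2 : vmorph) : vmorph.
Proof.
exists (prodMon (vm_mon m1) (vm_mon m2)) (fun u => (m1 u, m2 u)).
- exact: V_prod (vm_in m1) (vm_in m2).
- by rewrite /= !vm_nil.
- by move=> u v; rewrite /= !vm_cat.
Defined.

Lemma saturates_prodl (m1 m2 : vmorph) psi :
  saturates m1 psi -> saturates (vmorph_prod m1 m2) psi.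
Proof. by move=> S u w [/S]. Qed.

Lemma saturates_prodr (m1 m2 : vmorph) psi :
  saturates m2 psi -> saturates (vmorph_prod m1 m2) psi.
Proof. by move=> S u w [_ /S]. Qed.

Variable F : fragment A.
Hypothesis F_V : corresponds F V.

Lemma F_formula_saturating_vmorph psi :
  F psi -> closed psi -> exists m : vmorph, saturates m psi.
Proof.
move=> Fpsi Cpsi.
have [B [[M [VM [phi [phi_nil phi_cat _ phi_ker]]]] B_psi]] :
    V_language V (fun u => models u psi).
  by apply/F_V; exists psi.
exists (VMorph VM phi_nil phi_cat) => u w /= E /B_psi [p [q [Hp [Hq Hrun]]]].
by apply/B_psi; exists p, q; do 2 split=> //; apply/(proj1 (phi_ker u w) E).
Qed.

Lemma F_family_saturating_vmorph (I : eqType) (s : seq I) (phi : I -> formula A) :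
  (forall i, i \in s -> F (phi i) /\ closed (phi i)) ->
  exists m : vmorph, forall i, i \in s -> saturates m (phi i).
Proof.
elim: s => [|i s IHs] Hs; first by exists vmorph_unit.
have [|m Hm] := IHs; first by move=> k Hk; apply: Hs; rewrite in_cons Hk orbT.
have [|Fi Ci] := Hs i; first by rewrite mem_head.
have [mi Hmi] := F_formula_saturating_vmorph Fi Ci.
exists (vmorph_prod mi m) => k; rewrite in_cons => /orP [/eqP -> | Hk].
  exact: saturates_prodl.
exact/saturates_prodr/Hm.
Qed.

End VarietyMorphisms.

Definition saturates_translation (A : finType) (X : Type) (h : seq A -> X)
    (T : translation A) :=
  (forall j a v, 1 <= j <= tk T -> v \in tS T ->
     saturates h (tphiL T j a v) /\ saturates h (tphiR T j a v)) /\
  (forall v, v \in tS T -> saturates h (tphiI T v) /\ saturates h (tphiT T v)).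

Lemma F_translation_saturating_vmorph (A : finType) (V : finMon -> Prop)
    (F : fragment A) (T : translation A) :
  monoid_variety V -> corresponds F V -> is_F_translation F T ->
  exists m : vmorph A V, saturates_translation m T.
Proof.
move=> V_variety F_V [_ F_LR F_IT _ _].
pose idx := [seq (ja, v) | ja <- [seq (j, a) | j <- iota 1 (tk T), a <- enum A],
                           v <- tS T].
have mem_idx j a v : 1 <= j <= tk T -> v \in tS T -> (j, a, v) \in idx.
  move=> Hj Hv; apply: allpairs_f => //; apply: allpairs_f; last by rewrite mem_enum.
  by rewrite mem_iota addnC addn1.
have idx_F i : i \in idx -> [/\ 1 <= i.1.1 <= tk T & i.2 \in tS T].
  by case/allpairsP => [[[j a] v] [/allpairsP [[j' a'] [+ _ [-> ->]]] Hv ->]];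
     rewrite mem_iota addnC addn1.
have [mL HL] : exists m : vmorph A V,
    forall i, i \in idx -> saturates m (tphiL T i.1.1 i.1.2 i.2).
  apply: F_family_saturating_vmorph => // i /idx_F [Hj Hv].
  by have [? [? _]] := F_LR _ i.1.2 _ Hj Hv.
have [mR HR] : exists m : vmorph A V,
    forall i, i \in idx -> saturates m (tphiR T i.1.1 i.1.2 i.2).
  apply: F_family_saturating_vmorph => // i /idx_F [Hj Hv].
  by have [_ [_ ?]] := F_LR _ i.1.2 _ Hj Hv.
have [mI HI] : exists m : vmorph A V, forall v, v \in tS T -> saturates m (tphiI T v).
  by apply: F_family_saturating_vmorph => // v /F_IT [? [? _]].
have [mT HT] : exists m : vmorph A V, forall v, v \in tS T -> saturates m (tphiT T v).
  by apply: F_family_saturating_vmorph => // v /F_IT [_ [_ ?]].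
exists (vmorph_prod V_variety (vmorph_prod V_variety mL mR) (vmorph_prod V_variety mI mT)).
split=> [j a v Hj Hv | v Hv]; split.
- exact/saturates_prodl/saturates_prodl/(HL (j, a, v))/mem_idx.
- exact/saturates_prodl/saturates_prodr/(HR (j, a, v))/mem_idx.
- exact/saturates_prodr/saturates_prodl/HI.
- exact/saturates_prodr/saturates_prodr/HT.
Qed.

Section MorphismBimachine.
Variables (A : finType) (P : finMon) (h : seq A -> P).
Hypotheses (h_nil : h [::] = mone P)
  (h_cat : forall u v, h (u ++ v) = mmul (h u) (h v)).
Variables (T : translation A) (f : seq A -> option (seq A)).
Hypotheses (f_def : definable_by f T) (h_sat : saturates_translation h T).
Hypothesis T_exhaustive : forall (a : A) (u w : seq A), exists j v,
  [/\ 1 <= j <= tk T, v \in tS T, models u (tphiL T j a v) & models w (tphiR T j a v)].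

Definition valid_block (x : seq A) (a : A) (y v : seq A) :=
  v \in tS T /\
  exists2 j, 1 <= j <= tk T & models x (tphiL T j a v) /\ models y (tphiR T j a v).

Lemma valid_block_saturated x x' a y y' v :
  h x = h x' -> h y = h y' -> valid_block x a y v -> valid_block x' a y' v.
Proof.
move=> Ex Ey [Hv [j Hj [Hx Hy]]]; split=> //; exists j => //.
have [satL satR] := (proj1 h_sat) j a v Hj Hv.
by split; [exact: satL Ex Hx | exact: satR Ey Hy].
Qed.

(* The default [::] is only taken on states outside the image of h, which
   the bimachine never reaches; elsewhere exhaustiveness provides a block. *)
Definition out_letter (l : P) (a : A) (r : P) : seq A :=
  odflt [::] (pick_opt (fun v => exists x y, [/\ h x = l, h y = r & valid_block x a y v])).

Lemma valid_out_letter x a y : valid_block x a y (out_letter (h x) a (h y)).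
Proof.
rewrite /out_letter; case E: pick_opt => [v|] /=.
  have [x' [y' [Ex Ey Hv]]] := pick_optP E.
  exact: valid_block_saturated Ex Ey Hv.
have [j [v [Hj Hv Hx Hy]]] := T_exhaustive a x y.
by case: (pick_opt_None (v := v) E); exists x, y; split=> //; split=> //; exists j.
Qed.

Definition out_init (r : P) : option (seq A) :=
  pick_opt (fun v => v \in tS T /\ exists2 x, h x = r & models x (tphiI T v)).

Definition out_final (l : P) : option (seq A) :=
  pick_opt (fun v => v \in tS T /\ exists2 x, h x = l & models x (tphiT T v)).

Definition morph_bimachine : bimachine A :=
  @Bimachine A P (mone P) (step_left h) P (mone P) (step_right h)
    (fun l a r => Some (out_letter l a r)) out_init out_final.

(* The blocks emitted on u when the left automaton has already read p. *)
Fixpoint out_blocks (p u : seq A) : seq (seq A) :=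
  if u is a :: u' then out_letter (h p) a (h u') :: out_blocks (rcons p a) u' else [::].

Lemma bm_mid_out_blocks p u : @bm_mid A morph_bimachine (h p) u = Some (flatten (out_blocks p u)).
Proof.
elim: u p => [|a u IHu] p //=.
by rewrite foldr_step_right // mmulm1 /step_left -h_cat cats1 IHu.
Qed.

Lemma size_out_blocks p u : size (out_blocks p u) = size u.
Proof. by elim: u p => [|a u IHu] p //=; rewrite IHu. Qed.

Lemma out_blocks_in_S p u : all (fun v => v \in tS T) (out_blocks p u).
Proof.
elim: u p => [|a u IHu] p //=.
by rewrite IHu andbT; case: (valid_out_letter p a u).
Qed.

Lemma nth_out_blocks_valid p x a y :
  valid_block (p ++ x) a y (nth [::] (out_blocks p (x ++ a :: y)) (size x)).
Proof.
elim: x p => [|b x IHx] p /=; first by rewrite cats0; exact: valid_out_letter.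
by rewrite -cat_rcons; apply: IHx.
Qed.

Lemma trans_rel_init_final u w : trans_rel T u w ->
  (exists2 v, v \in tS T & models u (tphiI T v)) /\
  (exists2 v, v \in tS T & models u (tphiT T v)).
Proof.
case=> ws [size_ws ws_S _ _ [HI HT]].
by split; [exists (nth [::] ws 0) | exists (nth [::] ws (size u).+1)] => //;
   apply: (allP ws_S); rewrite mem_nth // size_ws.
Qed.

Lemma trans_rel_out_blocks u v0 vt :
  out_init (h u) = Some v0 -> out_final (h u) = Some vt ->
  trans_rel T u (v0 ++ flatten (out_blocks [::] u) ++ vt).
Proof.
move=> init_v0 final_vt.
have [Hv0 [x Ex HI]] := pick_optP init_v0; have [Hvt [y Ey HT]] := pick_optP final_vt.
exists (v0 :: rcons (out_blocks [::] u) vt); split.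
- by rewrite /= size_rcons size_out_blocks.
- by rewrite /= all_rcons Hv0 Hvt out_blocks_in_S.
- by rewrite /= flatten_rcons catA.
- move=> x' a y' Hu.
  have Hlt : size x' < size (out_blocks [::] u).
    by rewrite size_out_blocks Hu size_cat /= addnS ltnS leq_addr.
  have [_ [j Hj [Hl Hr]]] := nth_out_blocks_valid [::] x' a y'.
  by exists j; split; rewrite //= nth_rcons Hlt Hu.
- rewrite /= nth_rcons size_out_blocks ltnn eqxx.
  have [satI satT] := (proj2 h_sat) _ Hv0; have [_ satT'] := (proj2 h_sat) _ Hvt.
  by split; [exact: satI Ex HI | exact: satT' Ey HT].
Qed.

Lemma morph_bimachine_sem u : bm_sem morph_bimachine u = f u.
Proof.
rewrite /bm_sem /= foldr_step_right // foldl_step_left // mmulm1 mmul1 -h_nil.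
rewrite bm_mid_out_blocks.
case Ei: out_init => [v0|]; last first.
  case E: (f u) => [w|] //; have [[v Hv HI] _] := trans_rel_init_final (proj2 (f_def u w) E).
  by case: (pick_opt_None (v := v) Ei); split=> //; exists u.
case Ef: out_final => [vt|]; last first.
  case E: (f u) => [w|] //; have [_ [v Hv HT]] := trans_rel_init_final (proj2 (f_def u w) E).
  by case: (pick_opt_None (v := v) Ef); split=> //; exists u.
by apply/esym/(f_def u); apply: trans_rel_out_blocks.
Qed.

End MorphismBimachine.

Theorem mainTheorem4 (Sigma : finType) (V : finMon -> Prop) (F : fragment Sigma)
  (f : seq Sigma -> option (seq Sigma)) :
  monoid_variety V ->
  corresponds F V ->
  (exists T : translation Sigma, is_F_translation F T /\ definable_by f T) ->
  exists B : bimachine Sigma,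
    [/\ complete B, V_bimachine V B & forall u, bm_sem B u = f u].
Proof.
move=> V_variety F_V [T [T_F f_def]].
have [m m_sat] := F_translation_saturating_vmorph V_variety F_V T_F.
have [_ _ _ T_exhaustive _] := T_F.
exists (morph_bimachine m T); split=> //.
- by split; [exact: trans_monoid_step_left | exact: trans_monoid_step_right].
- exact: (morph_bimachine_sem (vm_nil m) (vm_cat m) f_def m_sat T_exhaustive).
Qed.
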